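(* For any instance $\mathcal{I}$ of the online volunteer notification problem, $\mathbf{LP}_{\mathcal{I}}$ is at least the expected number of tasks completed by the clairvoyant solution.
   Context: Online volunteer notification problem. An instance $\mathcal{I}$ consists of volunteers $[V]$, task types $[S]$, horizon $T$, arrival probabilities $\lambda_{s,t}\ge0$ with $\sum_{s=1}^S\lambda_{s,t}\le1$, match probabilities $p_{v,s}\in[0,1]$, and a probability mass function $g$ on the positive integers with CDF $G(\tau)=\sum_{i\le\tau}g(i)$, $G(0)=0$. In each period $t$ at most one task arrives, of type $s$ with probability $\lambda_{s,t}$, independently across periods. All volunteers start active. Upon an arrival, a subset of volunteers is notified; each notified active volunteer $v$ responds positively independently with probability $p_{v,s}$, and the task is completed iff at least one does. A volunteer active and notified at time $t$ becomes inactive (regardless of response) and becomes active again at time $t+Z$, where $Z\sim g$ is independent; inactive volunteers ignore notifications and are unaffected by them. Clairvoyant solution: the best (maximum expected number of completed tasks) notification strategy that knows the entire sequence of arrivals in advance and the state (active/inactive) of every volunteer in every period, but does not know the realized inactivity length $Z$ of a volunteer notified at time $t$ before time $t$ (i.e., decisions at time $t$ cannot depend on inactivity lengths triggered at times $\ge t$). $\mathbf{LP}_{\mathcal{I}}=\max\sum_{t=1}^T\sum_{s=1}^S\lambda_{s,t}\min\{\sum_{v=1}^V x_{v,s,t}p_{v,s},1\}$ subject to $0\le x_{v,s,t}\le1$ for all $v,s,t$ and $\sum_{\tau=1}^t\sum_{s=1}^S\lambda_{s,\tau}x_{v,s,\tau}(1-G(t-\tau))\le1$ for all $v,t$. *)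

From HB Require Import structures.
From mathcomp Require Import all_boot all_order all_algebra.
From mathcomp Require Import all_classical all_reals all_analysis.
Set Implicit Arguments. Unset Strict Implicit. Unset Printing Implicit Defensive.
Import Order.TTheory GRing.Theory Num.Theory.
Local Open Scope ring_scope.

(* Conventions: volunteers 'I_V, task types 'I_S, periods 'I_T; the paper's
   period t (1..T) is the ordinal t-1 here.  lam s t = lambda_{s,t}, p v s = p_{v,s},
   g : nat -> R the pmf of the inactivity length (g 0 = 0 required). *)

Definition cdfG (R : realType) (g : nat -> R) (k : nat) : R :=
  \sum_(1 <= i < k.+1) g i.

Definition LP_obj (R : realType) (V S T : nat) (lam : 'I_S -> 'I_T -> R)
  (p : 'I_V -> 'I_S -> R) (x : 'I_V -> 'I_S -> 'I_T -> R) : R :=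
  \sum_(t < T) \sum_(s < S)
     lam s t * Num.min (\sum_(v < V) x v s t * p v s) 1.

Definition LP_feasible (R : realType) (V S T : nat) (lam : 'I_S -> 'I_T -> R)
  (g : nat -> R) (x : 'I_V -> 'I_S -> 'I_T -> R) : Prop :=
  (forall v s t, 0 <= x v s t <= 1) /\
  (forall (v : 'I_V) (t : 'I_T),
     \sum_(tau < T | (tau <= t)%N) \sum_(s < S)
        lam s tau * x v s tau * (1 - cdfG g (t - tau)) <= 1).

(* An outcome consists of
   - the arrival sequence: arr t = Some s (task of type s at t) or None;
   - inactivity draws: zz (v,t) = k means that if v is notified while active
     at t, it becomes inactive for Z = k+1 periods when k < T, and Z >= T+1
     when k = T (such a volunteer never comes back within the horizon, so
     truncating Z at T+1 is distributionally exact);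
   - response draws: rr (v,t,s) = whether v would respond positively to a
     task of type s notified at t. *)
Definition outcome (V S T : nat) : finType :=
  ({ffun 'I_T -> option 'I_S} * {ffun 'I_V * 'I_T -> 'I_T.+1}
    * {ffun 'I_V * 'I_T * 'I_S -> bool})%type.

Definition arr_of V S T (w : outcome V S T) := w.1.1.
Definition z_of V S T (w : outcome V S T) := w.1.2.
Definition r_of V S T (w : outcome V S T) := w.2.

Definition prob (R : realType) (V S T : nat) (lam : 'I_S -> 'I_T -> R)
  (p : 'I_V -> 'I_S -> R) (g : nat -> R) (w : outcome V S T) : R :=
  (\prod_(t < T) match arr_of w t with
                 | Some s => lam s t
                 | None => 1 - \sum_(s < S) lam s t end) *
  (\prod_(vt : 'I_V * 'I_T)
     let k := nat_of_ord (z_of w vt) in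
     if (k < T)%N then g k.+1 else 1 - cdfG g T) *
  (\prod_(vts : 'I_V * 'I_T * 'I_S)
     if r_of w vts then p vts.1.1 vts.2 else 1 - p vts.1.1 vts.2).

Definition policy (V S T : nat) := 'I_T -> outcome V S T -> 'I_V -> bool.

(* Clairvoyant information constraint: the decision at t may depend on the
   whole arrival sequence and on everything realized strictly before t
   (inactivity lengths and responses triggered at times < t), but not on
   inactivity lengths (or responses) triggered at times >= t. *)
Definition clairvoyant_admissible V S T (pol : policy V S T) : Prop :=
  forall (t : 'I_T) (w w' : outcome V S T),
    arr_of w = arr_of w' ->
    (forall (v : 'I_V) (tau : 'I_T), (tau < t)%N ->
        z_of w (v, tau) = z_of w' (v, tau) /\
        forall s, r_of w (v, tau, s) = r_of w' (v, tau, s)) ->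
    forall v, pol t w v = pol t w' v.

Section Dynamics.
Variables (V S T : nat) (pol : policy V S T) (w : outcome V S T).

Definition notified (n : nat) (v : 'I_V) : bool :=
  match (insub n : option 'I_T) with
  | Some t => (arr_of w t != None) && pol t w v
  | None => false
  end.

Definition zlen (n : nat) (v : 'I_V) : nat :=
  match (insub n : option 'I_T) with
  | Some t => (nat_of_ord (z_of w (v, t))).+1
  | None => 0
  end.

(* ret n v = the period at which v is (next) active, after periods 0..n-1. *)
Fixpoint ret (n : nat) (v : 'I_V) : nat :=
  match n with
  | 0 => 0
  | m.+1 => let r := ret m v in
            if (r <= m)%N && notified m v then (m + zlen m v)%N else r
  end.

Definition active (n : nat) (v : 'I_V) : bool := (ret n v <= n)%N.

Definition completed (t : 'I_T) : bool :=
  match arr_of w t with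
  | Some s => [exists v, [&& pol t w v, active t v & r_of w (v, t, s)]]
  | None => false
  end.

Definition num_completed : nat := \sum_(t < T) completed t.
End Dynamics.

Definition expected_completed (R : realType) (V S T : nat)
  (lam : 'I_S -> 'I_T -> R) (p : 'I_V -> 'I_S -> R) (g : nat -> R)
  (pol : policy V S T) : R :=
  \sum_(w : outcome V S T) prob lam p g w * (num_completed pol w)%:R.

From HB Require Import structures.
From mathcomp Require Import all_boot all_order all_algebra.
From mathcomp Require Import all_classical all_reals all_analysis.
From mathcomp Require Import zify ring.
Import Order.TTheory GRing.Theory Num.Theory.
Import numFieldNormedType.Exports.

Set Implicit Arguments.
Unset Strict Implicit.
Unset Printing Implicit Defensive.

(* Take x_{v,s,t} = P[a task of type s arrives at t and v is notified while
   active] / lambda_{s,t}.  Everything a clairvoyant decision at time t may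
   depend on is independent of the draws made at t.  So the inactivity length
   drawn at tau is independent of "v is notified while active at tau", and
   sum_s lambda_{s,tau} x_{v,s,tau} (1 - G(t - tau)) is the probability that v
   is notified while active at tau and still inactive at t; at most one
   tau <= t has this property, whence the capacity constraint.  Likewise the
   responses at t are independent of who is notified and active at t, so the
   task at t of type s is completed with probability at most lambda_{s,t}, and
   by the union bound at most sum_v lambda_{s,t} x_{v,s,t} p_{v,s}. *)

Definition fupd (I K : finType) (f : {ffun I -> K}) (i0 : I) (k : K) :
    {ffun I -> K} :=
  [ffun i => if i == i0 then k else f i].

Section FunctionUpdate.
Variables (I K : finType) (f : {ffun I -> K}) (i0 : I).

Lemma fupd_at k : fupd f i0 k i0 = k.
Proof. by rewrite ffunE eqxx. Qed.

Lemma fupd_other k i : i != i0 -> fupd f i0 k i = f i.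
Proof. by rewrite ffunE => /negbTE ->. Qed.

Lemma fupdK k : fupd (fupd f i0 k) i0 (f i0) = f.
Proof. by apply/ffunP => i; rewrite !ffunE; case: eqP => [->|]. Qed.

End FunctionUpdate.

Lemma sum_eq_Some (I : finType) (o : option I) (b : I -> bool) :
  \sum_i ((o == Some i) && b i) = (if o is Some i then b i else false).
Proof.
case: o => [i0|]; last by rewrite big1.
rewrite (bigD1 i0) //= eqxx big1 ?addn0 // => i ne_i.
by rewrite (inj_eq Some_inj) eq_sym (negbTE ne_i).
Qed.

Section Dynamics.
Variables (V S T : nat) (pol : policy V S T).
Hypothesis pol_adm : clairvoyant_admissible pol.
Local Notation Om := (outcome V S T).

Definition set_arr (w : Om) (t : 'I_T) (o : option 'I_S) : Om :=
  ((fupd (arr_of w) t o, z_of w), r_of w).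
Definition set_z (w : Om) (c : 'I_V * 'I_T) (k : 'I_T.+1) : Om :=
  ((arr_of w, fupd (z_of w) c k), r_of w).
Definition set_r (w : Om) (c : 'I_V * 'I_T * 'I_S) (b : bool) : Om :=
  ((arr_of w, z_of w), fupd (r_of w) c b).

Definition agree_before (n : nat) (w w' : Om) : Prop :=
  arr_of w = arr_of w' /\
  forall v (tau : 'I_T), tau < n ->
    z_of w (v, tau) = z_of w' (v, tau) /\
    forall s, r_of w (v, tau, s) = r_of w' (v, tau, s).

Lemma agree_before_le m n w w' :
  m <= n -> agree_before n w w' -> agree_before m w w'.
Proof.
by move=> le_mn [eq_arr eq_zr]; split=> // v tau /leq_trans/(_ le_mn)/eq_zr.
Qed.

Lemma agree_before_set_z w (c : 'I_V * 'I_T) k :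
  agree_before c.2 w (set_z w c k).
Proof.
split=> // v tau lt_tau; split=> //=.
by rewrite fupd_other //; apply: contraTneq lt_tau => <-; rewrite ltnn.
Qed.

Lemma agree_before_set_r w (c : 'I_V * 'I_T * 'I_S) b :
  agree_before c.1.2 w (set_r w c b).
Proof.
split=> // v tau lt_tau; split=> // s /=.
by rewrite fupd_other //; apply: contraTneq lt_tau => <-; rewrite ltnn.
Qed.

Lemma pol_agree_before (t : 'I_T) w w' v :
  agree_before t w w' -> pol t w v = pol t w' v.
Proof. by case=> eq_arr eq_zr; apply: pol_adm. Qed.

Lemma ret_agree_before n w w' v :
  agree_before n w w' -> ret pol w n v = ret pol w' n v.
Proof.
elim: n => [//|n IHn] agr /=.
rewrite IHn; last exact: agree_before_le agr.
rewrite /notified /zlen; case: insubP => [t _ val_t|_] //.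
have agr_t : agree_before t w w' by apply: agree_before_le agr; rewrite val_t.
case: (agr) => eq_arr eq_zr; rewrite eq_arr (pol_agree_before v agr_t).
by case: (eq_zr v t) => [|-> _] //; rewrite val_t.
Qed.

Definition active_notified (w : Om) (t : 'I_T) (v : 'I_V) : bool :=
  pol t w v && active pol w t v.

Lemma active_notified_agree_before (t : 'I_T) w w' v :
  agree_before t w w' -> active_notified w t v = active_notified w' t v.
Proof.
move=> agr; rewrite /active_notified /active (pol_agree_before v agr).
by rewrite (ret_agree_before v agr).
Qed.

Lemma active_notified_set_z w (c : 'I_V * 'I_T) k v :
  active_notified (set_z w c k) c.2 v = active_notified w c.2 v.
Proof. exact/esym/active_notified_agree_before/agree_before_set_z. Qed.

Lemma active_notified_set_r w (c : 'I_V * 'I_T * 'I_S) b v :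
  active_notified (set_r w c b) c.1.2 v = active_notified w c.1.2 v.
Proof. exact/esym/active_notified_agree_before/agree_before_set_r. Qed.

Lemma ret_while_inactive w (tau : 'I_T) v :
  arr_of w tau != None -> active_notified w tau v ->
  forall j, j <= z_of w (v, tau) ->
  ret pol w (tau + j.+1) v = tau + (z_of w (v, tau)).+1.
Proof.
move=> arr_tau /andP[pol_tau act_tau]; elim=> [_|j IHj lt_j].
  rewrite addn1 /= /notified /zlen valK arr_tau pol_tau.
  by rewrite -/(active _ _ _ _) act_tau addnS.
rewrite addnS /= IHj ?(ltnW lt_j) //.
by have -> : tau + (z_of w (v, tau)).+1 <= tau + j.+1 = false by lia.
Qed.

(* The inactivity length is [(z_of w (v, tau)).+1]; only meaningful for
   [tau <= t], as [t - tau] is truncated. *)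
Definition covers (w : Om) (t : nat) (v : 'I_V) (tau : 'I_T) : bool :=
  [&& arr_of w tau != None, active_notified w tau v
    & t - tau <= z_of w (v, tau)].

Lemma covers_disjoint w t v (t1 t2 : 'I_T) :
  t1 < t2 -> t2 <= t -> covers w t v t1 -> ~~ covers w t v t2.
Proof.
move=> lt12 le2t /and3P[arr1 att1 z1]; apply/negP => /and3P[_ /andP[_] + _].
have j_le : t2 - t1.+1 <= z_of w (v, t1) by lia.
rewrite /active -(subnKC lt12) addSnnS (ret_while_inactive arr1 att1 j_le).
lia.
Qed.

Lemma sum_covers_le1 w t v : \sum_(tau < T | tau <= t) covers w t v tau <= 1.
Proof.
case: (pickP (fun tau : 'I_T => (tau <= t) && covers w t v tau)).
  move=> t0 /andP[le0 cov0].
  rewrite (bigD1 t0) //= cov0 big1 // => tau /andP[le_tau ne_tau].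
  apply/eqP; rewrite eqb0; case: (ltngtP t0 tau) => [lt|lt|/val_inj eq].
  - exact: covers_disjoint cov0.
  - by apply: contraTN cov0; apply: covers_disjoint.
  - by rewrite eq eqxx in ne_tau.
move=> no_cover; rewrite big1 // => tau le_tau.
by have := no_cover tau; rewrite le_tau /= => ->.
Qed.

Lemma completedE w (t : 'I_T) :
  completed pol w t =
  \sum_s ((arr_of w t == Some s) &&
          [exists v, active_notified w t v && r_of w (v, t, s)]) :> nat.
Proof.
rewrite sum_eq_Some /completed; case: (arr_of w t) => // s.
by congr (nat_of_bool _); apply: eq_existsb => v; rewrite /active_notified andbA.
Qed.

End Dynamics.

Local Open Scope classical_set_scope.
Local Open Scope ring_scope.

Section ProductSums.
Variable R : comPzRingType.

Lemma sum_prod_pmf (I K : finType) (phi : I -> K -> R) :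
  (forall i, \sum_k phi i k = 1) ->
  \sum_(f : {ffun I -> K}) \prod_i phi i (f i) = 1.
Proof. by move=> phi1; rewrite -bigA_distr_bigA big1. Qed.

Lemma prod_fupd_other (I K : finType) (phi : I -> K -> R) f i0 k :
  \prod_(i | i != i0) phi i (fupd f i0 k i) = \prod_(i | i != i0) phi i (f i).
Proof. by apply: eq_bigr => i /fupd_other ->. Qed.

Variables (W K : finType).
Variables (coord : W -> K) (set : W -> K -> W).
Hypotheses (coord_set : forall w k, coord (set w k) = k)
  (set_coord : forall w k, set (set w k) (coord w) = w).

Lemma sum_indep_coord (phi h : K -> R) (rho : W -> R) :
  (forall w k, rho (set w k) = rho w) -> \sum_k phi k = 1 ->
  \sum_w phi (coord w) * h (coord w) * rho w =
  (\sum_k phi k * h k) * \sum_w phi (coord w) * rho w.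
Proof.
move=> rho_set phi1.
(* [(k, w) |-> (coord w, set w k)] is an involution of [K * W] that
   exchanges the roles of the two factors. *)
pose swap (kw : K * W) := (coord kw.2, set kw.2 kw.1).
have swapK : involutive swap by case=> k w; rewrite /swap /= coord_set set_coord.
rewrite -[LHS]mulr1 -phi1 mulr_suml mulr_suml.
under eq_bigr do rewrite mulr_sumr.
under [RHS]eq_bigr do rewrite mulr_sumr.
rewrite exchange_big !pair_big /= (reindex_inj (inv_inj swapK)) /=.
by apply: eq_bigr => -[k w] _; rewrite /swap /= coord_set rho_set; ring.
Qed.

End ProductSums.

Section Model.
Variables (R : realType) (V S T : nat).
Variables (lam : 'I_S -> 'I_T -> R) (p : 'I_V -> 'I_S -> R) (g : nat -> R).
Local Notation Om := (outcome V S T).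

Definition arrival_pmf (t : 'I_T) (o : option 'I_S) : R :=
  if o is Some s then lam s t else 1 - \sum_s lam s t.

Definition inactivity_pmf (k : 'I_T.+1) : R :=
  if (k < T)%N then g k.+1 else 1 - cdfG g T.

Definition response_pmf (c : 'I_V * 'I_T * 'I_S) (b : bool) : R :=
  if b then p c.1.1 c.2 else 1 - p c.1.1 c.2.

Lemma probE (w : Om) : prob lam p g w =
  (\prod_t arrival_pmf t (arr_of w t)) * (\prod_c inactivity_pmf (z_of w c)) *
  \prod_c response_pmf c (r_of w c).
Proof. by []. Qed.

Lemma sum_arrival_pmf t : \sum_o arrival_pmf t o = 1.
Proof.
rewrite (bigD1 None) //= (reindex_omap Some id) //=; last by case.
by rewrite [X in _ + X](eq_bigl predT) ?subrK // => s; rewrite eqxx.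
Qed.

Lemma sum_inactivity_pmf_lt d : (d <= T)%N ->
  \sum_(k < T.+1 | (k < d)%N) inactivity_pmf k = cdfG g d.
Proof.
move=> le_dT; pose f n := if (n < T)%N then g n.+1 else 1 - cdfG g T.
rewrite (eq_bigl (fun k : 'I_T.+1 => predT k && (k < d)%N)) //.
rewrite -(big_ord_widen_cond _ predT f (leqW le_dT)) /cdfG big_add1 /= big_mkord.
by apply: eq_bigr => k _; rewrite /f (leq_trans (ltn_ord k) le_dT).
Qed.

Lemma sum_inactivity_pmf : \sum_k inactivity_pmf k = 1.
Proof.
rewrite (bigID (fun k : 'I_T.+1 => (k < T)%N)) /= sum_inactivity_pmf_lt //.
rewrite (big_pred1 ord_max) => [|k].
  by rewrite /inactivity_pmf ltnn addrC subrK.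
by rewrite -leqNgt /= -val_eqE eqn_leq -[(k <= T)%N]ltnS ltn_ord.
Qed.

Lemma sum_inactivity_pmf_ge d : (d <= T)%N ->
  \sum_(k < T.+1 | (d <= k)%N) inactivity_pmf k = 1 - cdfG g d.
Proof.
move=> le_dT; rewrite -sum_inactivity_pmf.
rewrite [in RHS](bigID (fun k : 'I_T.+1 => (k < d)%N)) /=.
rewrite sum_inactivity_pmf_lt // addrAC subrr add0r.
by apply: eq_bigl => k; rewrite leqNgt.
Qed.

Lemma sum_response_pmf c : \sum_b response_pmf c b = 1.
Proof. by rewrite big_bool /= addrC subrK. Qed.

Lemma sum_outcome (F : Om -> R) :
  \sum_w F w = \sum_a \sum_z \sum_r F ((a, z), r).
Proof. by rewrite pair_bigA pair_bigA; apply: eq_bigr => -[[a z] r]. Qed.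

Definition Ex (F : Om -> R) : R := \sum_w prob lam p g w * F w.
Definition Pr (E : pred Om) : R := Ex (fun w => (E w)%:R).

Lemma eq_Ex F G : F =1 G -> Ex F = Ex G.
Proof. by move=> eqFG; apply: eq_bigr => w _; rewrite eqFG. Qed.

Lemma eq_Pr (E E' : pred Om) : E =1 E' -> Pr E = Pr E'.
Proof. by move=> eqE; apply: eq_Ex => w; rewrite eqE. Qed.

Lemma Ex_sum (I : finType) (P : pred I) (F : I -> Om -> R) :
  Ex (fun w => \sum_(i | P i) F i w) = \sum_(i | P i) Ex (F i).
Proof. by rewrite /Ex exchange_big; apply: eq_bigr => w _; rewrite mulr_sumr. Qed.

Lemma sum_Pr (I : finType) (P : pred I) (E : I -> pred Om) :
  \sum_(i | P i) Pr (E i) = Ex (fun w => (\sum_(i | P i) E i w)%:R).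
Proof. by rewrite -Ex_sum; apply: eq_Ex => w; rewrite natr_sum. Qed.

Lemma Ex1 : Ex (fun=> 1) = 1.
Proof.
transitivity ((\sum_(a : {ffun 'I_T -> option 'I_S}) \prod_t arrival_pmf t (a t)) *
  ((\sum_(z : {ffun 'I_V * 'I_T -> 'I_T.+1}) \prod_c inactivity_pmf (z c)) *
   (\sum_(r : {ffun 'I_V * 'I_T * 'I_S -> bool}) \prod_c response_pmf c (r c)))).
  rewrite /Ex sum_outcome mulr_suml; apply: eq_bigr => a _.
  rewrite mulr_suml mulr_sumr; apply: eq_bigr => z _.
  by rewrite !mulr_sumr; apply: eq_bigr => r _; rewrite mulr1 probE mulrA.
rewrite (sum_prod_pmf sum_arrival_pmf) (sum_prod_pmf sum_response_pmf).
by rewrite (sum_prod_pmf (fun _ : 'I_V * 'I_T => sum_inactivity_pmf)) !mulr1.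
Qed.

Lemma Ex_indep_coord (K : finType) (coord : Om -> K) (set : Om -> K -> Om)
    (phi h : K -> R) (F rho : Om -> R) :
  (forall w k, coord (set w k) = k) ->
  (forall w k, set (set w k) (coord w) = w) ->
  (forall w, prob lam p g w * F w = phi (coord w) * rho w) ->
  (forall w k, rho (set w k) = rho w) -> \sum_k phi k = 1 ->
  Ex (fun w => h (coord w) * F w) = (\sum_k phi k * h k) * Ex F.
Proof.
move=> coord_set set_coord probF rho_set phi1; rewrite /Ex.
transitivity (\sum_w phi (coord w) * h (coord w) * rho w).
  by apply: eq_bigr => w _; rewrite mulrCA probF mulrCA mulrA.
rewrite (sum_indep_coord coord_set set_coord) //; congr (_ * _).
by apply: eq_bigr => w _; rewrite probF.
Qed.

Lemma Ex_indep_arr (F : Om -> R) t (h : option 'I_S -> R) :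
  (forall w o, F (set_arr w t o) = F w) ->
  Ex (fun w => h (arr_of w t) * F w) = (\sum_o arrival_pmf t o * h o) * Ex F.
Proof.
move=> F_set; apply: (Ex_indep_coord (set := fun w => set_arr w t) h
  (rho := fun w => (\prod_(t' | t' != t) arrival_pmf t' (arr_of w t')) *
     (\prod_c inactivity_pmf (z_of w c)) * (\prod_c response_pmf c (r_of w c)) *
     F w)).
- by move=> w o; rewrite /= fupd_at.
- by move=> [[a z] r] o; rewrite /set_arr /= fupdK.
- by move=> w; rewrite probE (bigD1 t) //=; ring.
- by move=> w o; rewrite F_set /= prod_fupd_other.
- exact: sum_arrival_pmf.
Qed.

Lemma Ex_indep_z (F : Om -> R) c (h : 'I_T.+1 -> R) :
  (forall w k, F (set_z w c k) = F w) ->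
  Ex (fun w => h (z_of w c) * F w) = (\sum_k inactivity_pmf k * h k) * Ex F.
Proof.
move=> F_set; apply: (Ex_indep_coord (set := fun w => set_z w c) h
  (rho := fun w => (\prod_t arrival_pmf t (arr_of w t)) *
     (\prod_(c' | c' != c) inactivity_pmf (z_of w c')) *
     (\prod_c response_pmf c (r_of w c)) * F w)).
- by move=> w k; rewrite /= fupd_at.
- by move=> [[a z] r] k; rewrite /set_z /= fupdK.
- by move=> w; rewrite probE (bigD1 c) //=; ring.
- by move=> w k; rewrite F_set /= (prod_fupd_other (fun=> inactivity_pmf)).
- exact: sum_inactivity_pmf.
Qed.

Lemma Ex_indep_r (F : Om -> R) c (h : bool -> R) :
  (forall w b, F (set_r w c b) = F w) ->
  Ex (fun w => h (r_of w c) * F w) = (\sum_b response_pmf c b * h b) * Ex F.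
Proof.
move=> F_set; apply: (Ex_indep_coord (set := fun w => set_r w c) h
  (rho := fun w => (\prod_t arrival_pmf t (arr_of w t)) *
     (\prod_c inactivity_pmf (z_of w c)) *
     (\prod_(c' | c' != c) response_pmf c' (r_of w c')) * F w)).
- by move=> w b; rewrite /= fupd_at.
- by move=> [[a z] r] b; rewrite /set_r /= fupdK.
- by move=> w; rewrite probE (bigD1 c) //=; ring.
- by move=> w b; rewrite F_set /= prod_fupd_other.
- exact: sum_response_pmf.
Qed.

Lemma Pr_arr s t : Pr (fun w => arr_of w t == Some s) = lam s t.
Proof.
transitivity (Ex (fun w => (arr_of w t == Some s)%:R * 1)).
  by apply: eq_Ex => w; rewrite mulr1.
rewrite (Ex_indep_arr (fun o => (o == Some s)%:R)) // Ex1 mulr1.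
rewrite (bigD1 (Some s)) //= eqxx mulr1 big1 ?addr0 //.
by move=> o /negbTE->; rewrite mulr0.
Qed.

Lemma Pr_indep_z (E : pred Om) c d : (d <= T)%N ->
  (forall w k, E (set_z w c k) = E w) ->
  Pr (fun w => (d <= z_of w c)%N && E w) = (1 - cdfG g d) * Pr E.
Proof.
move=> le_dT E_set.
rewrite /Pr (eq_Ex (G := fun w => (d <= z_of w c)%N%:R * (E w)%:R)).
  rewrite (Ex_indep_z (fun k => (d <= k)%N%:R)) => [|w k]; last by rewrite E_set.
  congr (_ * _); rewrite -sum_inactivity_pmf_ge // [in RHS]big_mkcond.
  by apply: eq_bigr => k _; case: ifP; rewrite ?mulr1 ?mulr0.
by move=> w; rewrite -natrM mulnb.
Qed.

Lemma Pr_indep_r (E : pred Om) c :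
  (forall w b, E (set_r w c b) = E w) ->
  Pr (fun w => r_of w c && E w) = p c.1.1 c.2 * Pr E.
Proof.
move=> E_set; rewrite /Pr (eq_Ex (G := fun w => (r_of w c)%:R * (E w)%:R)).
  rewrite (Ex_indep_r (fun b => b%:R)) => [|w b]; last by rewrite E_set.
  by rewrite big_bool /= mulr1 mulr0 addr0.
by move=> w; rewrite -natrM mulnb.
Qed.

End Model.

Section Witness.
Variables (R : realType) (V S T : nat).
Variables (lam : 'I_S -> 'I_T -> R) (p : 'I_V -> 'I_S -> R) (g : nat -> R).
Hypotheses (lam_ge0 : forall s t, 0 <= lam s t)
  (lam_sum : forall t, \sum_s lam s t <= 1)
  (p_01 : forall v s, 0 <= p v s <= 1)
  (g_ge0 : forall i, 0 <= g i) (cdfG_T_le1 : cdfG g T <= 1).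
Variable pol : policy V S T.
Hypothesis pol_adm : clairvoyant_admissible pol.
Local Notation Om := (outcome V S T).
Local Notation Ex := (Ex lam p g).
Local Notation Pr := (Pr lam p g).

Lemma prob_ge0 (w : Om) : 0 <= prob lam p g w.
Proof.
rewrite probE !mulr_ge0 //; apply: prodr_ge0 => c _.
- by case: (arr_of w c) => [s|] /=; rewrite ?subr_ge0.
- by rewrite /inactivity_pmf; case: ifP; rewrite ?subr_ge0.
- case/andP: (p_01 c.1.1 c.2) => p_ge0 p_le1.
  by rewrite /response_pmf; case: ifP; rewrite ?subr_ge0.
Qed.

Lemma ler_Ex (F G : Om -> R) : (forall w, F w <= G w) -> Ex F <= Ex G.
Proof. by move=> leFG; apply: ler_sum => w _; rewrite ler_wpM2l ?prob_ge0. Qed.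

Lemma Pr_ge0 (E : pred Om) : 0 <= Pr E.
Proof. by apply: sumr_ge0 => w _; rewrite mulr_ge0 ?prob_ge0 ?ler0n. Qed.

Lemma Pr_le (E E' : pred Om) : (forall w, E w -> E' w) -> Pr E <= Pr E'.
Proof.
move=> EE'; apply: ler_Ex => w.
by rewrite ler_nat; case: (boolP (E w)) => [/EE'->|].
Qed.

Lemma Pr_exists_le (I : finType) (E : I -> pred Om) :
  Pr (fun w => [exists i, E i w]) <= \sum_i Pr (E i).
Proof.
rewrite sum_Pr; apply: ler_Ex => w; rewrite ler_nat.
by case: existsP => [[i Ei]|//]; rewrite (bigD1 i) //= Ei leq_addr.
Qed.

Lemma sum_Pr_le1 (I : finType) (P : pred I) (E : I -> pred Om) :
  (forall w, (\sum_(i | P i) E i w <= 1)%N) -> \sum_(i | P i) Pr (E i) <= 1.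
Proof.
move=> le1; rewrite sum_Pr -[X in _ <= X](Ex1 lam p g).
by apply: ler_Ex => w; rewrite lern1.
Qed.

Definition notify_prob v s t : R :=
  Pr (fun w => (arr_of w t == Some s) && active_notified pol w t v).

Definition lp_witness v s t : R := notify_prob v s t / lam s t.

Lemma notify_prob_le_lam v s t : notify_prob v s t <= lam s t.
Proof. by rewrite -(Pr_arr lam p g); apply: Pr_le => w /andP[]. Qed.

Lemma lam_lp_witness v s t : lam s t * lp_witness v s t = notify_prob v s t.
Proof.
have [lam0|lam_neq0] := eqVneq (lam s t) 0; last by rewrite mulrC divfK.
have := notify_prob_le_lam v s t; rewrite lam0 mul0r => le0.
by apply/esym/le_anti; rewrite le0 /notify_prob Pr_ge0.
Qed.

Lemma lp_witness_01 v s t : 0 <= lp_witness v s t <= 1.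
Proof.
rewrite /lp_witness divr_ge0 ?lam_ge0 ?Pr_ge0 //=.
have [->|lam_neq0] := eqVneq (lam s t) 0; first by rewrite invr0 mulr0.
by rewrite ler_pdivrMr ?lt0r ?lam_neq0 ?lam_ge0 // mul1r notify_prob_le_lam.
Qed.

Lemma sum_notify_prob v tau :
  \sum_s notify_prob v s tau =
  Pr (fun w => (arr_of w tau != None) && active_notified pol w tau v).
Proof.
rewrite sum_Pr; apply: eq_Ex => w.
rewrite (sum_eq_Some _ (fun=> active_notified pol w tau v)).
by case: (arr_of w tau).
Qed.

Lemma sum_notify_prob_tail v (t tau : 'I_T) :
  (\sum_s notify_prob v s tau) * (1 - cdfG g (t - tau)) =
  Pr (fun w => covers pol w t v tau).
Proof.
rewrite sum_notify_prob mulrC -(Pr_indep_z lam p g (c := (v, tau))).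
- by apply: eq_Pr => w; rewrite /covers andbC andbA.
- exact: leq_trans (leq_subr _ _) (ltnW (ltn_ord t)).
- by move=> w k; rewrite /= (active_notified_set_z pol_adm _ (v, tau)).
Qed.

Lemma lp_witness_feasible : LP_feasible lam g lp_witness.
Proof.
split=> [v s t|v t]; first exact: lp_witness_01.
rewrite (eq_bigr (fun tau => Pr (fun w => covers pol w t v tau))) => [|tau _].
  exact: sum_Pr_le1 (fun w => sum_covers_le1 pol w t v).
rewrite -mulr_suml -sum_notify_prob_tail; congr (_ * _).
by apply: eq_bigr => s _; rewrite lam_lp_witness.
Qed.

Lemma expected_completedE :
  expected_completed lam p g pol =
  \sum_t \sum_s Pr (fun w => (arr_of w t == Some s) &&
                   [exists v, active_notified pol w t v && r_of w (v, t, s)]).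
Proof.
transitivity (\sum_t Ex (fun w => (completed pol w t)%:R)); last first.
  by apply: eq_bigr => t _; rewrite sum_Pr; apply: eq_Ex => w; rewrite completedE.
by rewrite -Ex_sum; apply: eq_Ex => w; rewrite /num_completed natr_sum.
Qed.

Lemma Pr_completed_le (t : 'I_T) s :
  Pr (fun w => (arr_of w t == Some s) &&
         [exists v, active_notified pol w t v && r_of w (v, t, s)]) <=
  lam s t * Num.min (\sum_v lp_witness v s t * p v s) 1.
Proof.
rewrite minr_pMr // le_min mulr1 mulr_sumr; apply/andP; split; last first.
  by rewrite -(Pr_arr lam p g); apply: Pr_le => w /andP[].
pose E v w :=
  r_of w (v, t, s) && ((arr_of w t == Some s) && active_notified pol w t v).
apply: le_trans (Pr_le (E' := fun w => [exists v, E v w]) _) _.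
  move=> w /andP[arr_s /existsP[v /andP[an r]]].
  by apply/existsP; exists v; rewrite /E r arr_s an.
rewrite (eq_bigr (fun v => Pr (E v))) => [|v _]; first exact: Pr_exists_le.
rewrite (Pr_indep_r lam p g (c := (v, t, s))) /= => [|w b].
  by rewrite mulrA lam_lp_witness mulrC.
by rewrite /= (active_notified_set_r pol_adm _ (v, t, s)).
Qed.

Lemma expected_completed_le_LP_obj :
  expected_completed lam p g pol <= LP_obj lam p lp_witness.
Proof.
rewrite expected_completedE; apply: ler_sum => t _; apply: ler_sum => s _.
exact: Pr_completed_le.
Qed.

End Witness.

Lemma cdfG_le1 (R : realType) (g : nat -> R) n :
  g 0%N = 0 -> (forall i, 0 <= g i) -> series g @ \oo --> (1 : R) ->
  cdfG g n <= 1.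
Proof.
move=> g0 g_ge0 g_sum1.
have -> : cdfG g n = series g n.+1.
  by rewrite /series /= /cdfG big_ltn // g0 add0r.
have series_nd : {homo series g : m k / (m <= k)%N >-> m <= k}.
  by apply: nondecreasing_series => k _ _; apply: g_ge0.
have := nondecreasing_cvgn_le series_nd (cvgP _ g_sum1) n.+1.
by rewrite (cvg_lim _ g_sum1).
Qed.

Theorem proposition1 (R : realType) (V S T : nat)
  (lam : 'I_S -> 'I_T -> R) (p : 'I_V -> 'I_S -> R) (g : nat -> R)
  (lam_ge0 : forall s t, 0 <= lam s t)
  (lam_sum : forall t, \sum_(s < S) lam s t <= 1)
  (p_01 : forall v s, 0 <= p v s <= 1)
  (g0 : g 0%N = 0)
  (g_ge0 : forall i, 0 <= g i)
  (g_sum1 : series g @ \oo --> (1 : R))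
  (pol : policy V S T) (pol_adm : clairvoyant_admissible pol) :
  exists x : 'I_V -> 'I_S -> 'I_T -> R,
    LP_feasible lam g x /\ expected_completed lam p g pol <= LP_obj lam p x.
Proof.
have cdfG_T_le1 : cdfG g T <= 1 by apply: cdfG_le1.
exists (lp_witness lam p g pol); split.
- by apply: lp_witness_feasible.
- by apply: expected_completed_le_LP_obj.
Qed.
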